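(* Let $M,N$ be sharp, integral monoids, $\Gamma$ an $M$-metrised graph, $f:M\to N$ an injective monoid homomorphism with edge contraction $\Gamma'$ of $\Gamma$ along $f$, and $D\in\operatorname{Div}(\Gamma)$. Then $r(f_*(D))=r(D)$.
   Context: Monoids are commutative, sharp (only unit $0$), integral (cancellative), with groupification; $\langle m\rangle=\{km:k\in\mathbb Z\}$ and for $x=km$, $m\ne0$, $x/m:=k$. A graph is $(X,r,i)$, $X$ finite, $r$ idempotent, $i$ an involution, $i(x)=x\iff r(x)=x$; vertices $V$ = fixed points, half-edges $H=X\setminus V$, edges $\{e,i(e)\}$ joining $r(e),r(i(e))$, $H_v=\{e\in H:r(e)=v\}$; graphs are connected. An $M$-metrised graph adds $l:X\to M$ with $l(i(x))=l(x)$, $l(x)=0\iff x\in V$. Divisors: free abelian group on $V$, pointwise order; $\operatorname{Div}^k_+$ = effective divisors of degree $k$. $\operatorname{PL}(\Gamma)=\{g:V\to M^{gp}: g(r(e))-g(r(i(e)))\in\langle l(e)\rangle\ \forall e\in H\}$; $\Delta(g)=\sum_{v}\big(\sum_{e\in H_v}\frac{g(v)-g(r(i(e)))}{l(e)}\big)[v]$; $D\sim D'$ iff $D-D'\in\Delta(\operatorname{PL}(\Gamma))$; $|D|=\{E\ge0:E\sim D\}$; $r(D)=\max\{k\in\mathbb Z:|D-F|\ne\emptyset\ \forall F\in\operatorname{Div}^k_+(\Gamma)\}$. The edge contraction of $\Gamma$ along $f$ is the $N$-metrised graph $\Gamma'$ obtained as the quotient of $X$ by the equivalence relation generated by $e\sim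 r(e)\sim i(e)\sim r(i(e))$ for every $e\in H$ with $f(l(e))=0$, with induced $r,i$ and length $f\circ l$; $\varphi$ is the quotient map and $f_*(D)=\sum_{v}D(v)[\varphi(v)]$. *)

From HB Require Import structures.
From mathcomp Require Import all_boot all_order all_algebra.
From Stdlib Require Import ClassicalEpsilon.
Set Implicit Arguments. Unset Strict Implicit. Unset Printing Implicit Defensive.
Import Order.TTheory GRing.Theory Num.Theory.
Local Open Scope ring_scope.

(* A sharp integral (commutative) monoid M, presented as a subset of its
   groupification G: M contains 0, is closed under +, is sharp, and
   generates G (every element of G is a difference of elements of M). *)
Definition sharp_integral_monoid (G : zmodType) (M : pred G) : Prop :=
  [/\ (0 : G) \in M,
      (forall x y, x \in M -> y \in M -> x + y \in M),
      (forall x, x \in M -> - x \in M -> x = 0) &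
      (forall g : G, exists a b, [/\ a \in M, b \in M & g = a - b])].

(* A monoid homomorphism M -> N (only its values on M matter). *)
Definition monoid_hom (G H : zmodType) (M : pred G) (N : pred H) (f : G -> H)
  : Prop :=
  [/\ (forall x, x \in M -> f x \in N), f 0 = 0 &
      (forall x y, x \in M -> y \in M -> f (x + y) = f x + f y)].

Record mgraph (G : zmodType) := MGraph {
  mg_X : finType;
  mg_r : mg_X -> mg_X;
  mg_i : mg_X -> mg_X;
  mg_l : mg_X -> G }.

Section Graphs.
Variables (G : zmodType) (Ga : mgraph G).
Local Notation X := (@mg_X G Ga).
Local Notation r := (@mg_r G Ga).
Local Notation i := (@mg_i G Ga).
Local Notation l := (@mg_l G Ga).

Definition is_vertex (x : X) : bool := r x == x.
Definition is_half_edge (x : X) : bool := r x != x.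

Definition adj : rel X :=
  fun u v => [exists e, [&& is_half_edge e, r e == u & r (i e) == v]].

Definition connected_graph : Prop :=
  forall u v, is_vertex u -> is_vertex v -> connect adj u v.

Definition is_metrised_graph (M : pred G) : Prop :=
  (forall x, r (r x) = r x) /\
  (forall x, i (i x) = x) /\
  (forall x, i x = x <-> r x = x) /\
  (forall x, l (i x) = l x) /\
  (forall x, l x = 0 <-> r x = x) /\
  (forall x, l x \in M) /\
  connected_graph.

Definition divisor (D : X -> int) : Prop := forall x, ~~ is_vertex x -> D x = 0.
Definition deg (D : X -> int) : int := \sum_(x : X) D x.
Definition effective (D : X -> int) : Prop := forall x, 0 <= D x.

Definition zquot (x m : G) : int :=
  epsilon (inhabits 0%R) (fun k : int => x = m *~ k).

(* piecewise linear functions V -> M^gp (= G) *)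
Definition PL (g : X -> G) : Prop :=
  forall e, is_half_edge e -> exists k : int, g (r e) - g (r (i e)) = l e *~ k.

Definition Laplacian (g : X -> G) : X -> int :=
  fun x => if is_vertex x then
             \sum_(e : X | (r e == x) && is_half_edge e) zquot (g x - g (r (i e))) (l e)
           else 0.

Definition lin_equiv (D D' : X -> int) : Prop :=
  exists g, PL g /\ forall x, D x - D' x = Laplacian g x.

Definition linsys_nonempty (D : X -> int) : Prop :=
  exists E, [/\ divisor E, effective E & lin_equiv E D].

Definition rank_cond (D : X -> int) (k : int) : Prop :=
  forall F, divisor F -> effective F -> deg F = k ->
    linsys_nonempty (fun x => D x - F x).

Definition is_rank (D : X -> int) (k : int) : Prop :=
  rank_cond D k /\ forall k', rank_cond D k' -> k' <= k.

Definition rank (D : X -> int) : int := epsilon (inhabits 0%R) (is_rank D).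

End Graphs.

Section Contraction.
Variables (G H : zmodType) (Ga : mgraph G) (Gb : mgraph H) (f : G -> H).
Local Notation X := (@mg_X G Ga).
Local Notation r := (@mg_r G Ga).
Local Notation i := (@mg_i G Ga).
Local Notation l := (@mg_l G Ga).

Definition contr_rel : rel X :=
  fun x y => [exists e, [&& is_half_edge e, f (l e) == 0,
                  x \in [:: e; r e; i e; r (i e)] &
                  y \in [:: e; r e; i e; r (i e)]]].

(* Gb, with quotient map phi, is the edge contraction of Ga along f:
   phi is the quotient map of X by the equivalence relation generated by
   contr_rel (connect of a symmetric relation), with induced r, i and
   length f o l. *)
Definition is_edge_contraction (phi : X -> mg_X Gb) : Prop :=
  (forall y, exists x, phi x = y) /\
  (forall x y, phi x = phi y <-> connect contr_rel x y) /\
  (forall x, phi (r x) = @mg_r H Gb (phi x)) /\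
  (forall x, phi (i x) = @mg_i H Gb (phi x)) /\
  (forall x, @mg_l H Gb (phi x) = f (l x)).

Definition pushforward (phi : X -> mg_X Gb) (D : X -> int) : mg_X Gb -> int :=
  fun y => \sum_(x : X | is_vertex x && (phi x == y)) D x.

End Contraction.

(* Since f is injective and lengths of half-edges are nonzero elements of M,
   no edge is contracted: the quotient map phi is a bijection commuting with
   r and i, and l' o phi = f o l.  Divisors then correspond along phi, and so
   do linear equivalences.  A piecewise linear g on Gamma gives f^gp o g on
   Gamma', with the same slopes, hence the same Laplacian.  Conversely, a
   piecewise linear g' on Gamma' has all its differences between vertices in
   f^gp(M^gp) (walk along edges, using connectedness), and since f^gp is
   injective it lifts to a potential on Gamma with the same Laplacian.  So
   the rank conditions for D and f_* D coincide. *)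

From mathcomp Require Import all_boot all_order all_algebra.
From Stdlib Require Import ClassicalEpsilon FunctionalExtensionality PropExtensionality.
Set Implicit Arguments. Unset Strict Implicit. Unset Printing Implicit Defensive.
Import Order.TTheory GRing.Theory Num.Theory.
Local Open Scope ring_scope.

Section SharpMonoid.
Variables (G : zmodType) (M : pred G).
Hypothesis hM : sharp_integral_monoid M.

Lemma monoid0 : 0 \in M.
Proof. by case: hM. Qed.

Lemma monoidD x y : x \in M -> y \in M -> x + y \in M.
Proof. by case: hM => _ hD _ _; apply: hD. Qed.

Lemma monoidMn m n : m \in M -> m *+ n \in M.
Proof.
move=> hm; elim: n => [|n IH]; first by rewrite mulr0n monoid0.
by rewrite mulrS monoidD.
Qed.

Lemma monoid_mulrz_eq0 m n : m \in M -> m != 0 -> m *~ n = 0 -> n = 0.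
Proof.
move=> hm m0.
have mulrSn_neq0 k : m *+ k.+1 != 0.
  apply: contra m0 => /eqP mk0; case: hM => _ _ sharp _; apply/eqP/sharp => //.
  suff -> : - m = m *+ k by rewrite monoidMn.
  by apply/eqP; rewrite eq_sym -addr_eq0 -mulrSr mk0.
case: n => [[|k]|k] //= /eqP; first by rewrite (negbTE (mulrSn_neq0 k)).
by rewrite NegzE mulrNz oppr_eq0 (negbTE (mulrSn_neq0 k)).
Qed.

Lemma zquotE m k : m \in M -> m != 0 -> zquot (m *~ k) m = k.
Proof.
move=> hm m0; rewrite /zquot.
have ex : exists k0 : int, m *~ k = m *~ k0 by exists k.
have := epsilon_spec (inhabits 0%R) _ ex.
set q := epsilon _ _ => eq.
have : m *~ (q - k) = 0 by rewrite mulrzBr -eq subrr.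
by move/(monoid_mulrz_eq0 hm m0)/eqP; rewrite subr_eq0 => /eqP.
Qed.

End SharpMonoid.

Section Groupification.
Variables (G H : zmodType) (M : pred G) (N : pred H) (f : G -> H).
Hypotheses (hM : sharp_integral_monoid M) (hf : monoid_hom M N f).

Definition diff_repr (x : G) : G * G :=
  epsilon (inhabits (0, 0)) (fun p => [/\ p.1 \in M, p.2 \in M & x = p.1 - p.2]).

Definition fgp (x : G) : H := f (diff_repr x).1 - f (diff_repr x).2.

Lemma diff_reprP x :
  [/\ (diff_repr x).1 \in M, (diff_repr x).2 \in M & x = (diff_repr x).1 - (diff_repr x).2].
Proof.
apply: (epsilon_spec (inhabits (0, 0)) (fun p : G * G => [/\ p.1 \in M, p.2 \in M & x = p.1 - p.2])).
by case: hM => _ _ _ /(_ x) [a [b [ha hb e]]]; exists (a, b).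
Qed.

Lemma fgpE x a b : a \in M -> b \in M -> x = a - b -> fgp x = f a - f b.
Proof.
move=> ha hb ->; rewrite /fgp; case: (diff_reprP (a - b)).
set a' := (diff_repr _).1; set b' := (diff_repr _).2 => ha' hb' e.
case: hf => _ _ fD.
have /(congr1 f) : a' + b = a + b' by rewrite -[a'](subrK b') -e addrAC subrK.
rewrite !fD // => e'.
by rewrite -(addrK (f b) (f a')) e' addrAC addrK.
Qed.

Lemma fgp_monoid m : m \in M -> fgp m = f m.
Proof.
move=> hm; case: hf => _ f0 _.
by rewrite (fgpE hm (monoid0 hM) (esym (subr0 m))) f0 subr0.
Qed.

Lemma fgp0 : fgp 0 = 0.
Proof. by rewrite (fgpE (monoid0 hM) (monoid0 hM) (esym (subrr 0))) subrr. Qed.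

Lemma fgpD x y : fgp (x + y) = fgp x + fgp y.
Proof.
case: (diff_reprP x) => ha hb ex; case: (diff_reprP y) => hc hd ey.
case: hf => _ _ fD.
rewrite (fgpE (monoidD hM ha hc) (monoidD hM hb hd) (_ : _ = _ - _)).
  by rewrite !fD // opprD addrACA.
by rewrite {1}ex {1}ey opprD addrACA.
Qed.

Lemma fgpN x : fgp (- x) = - fgp x.
Proof. by apply/eqP; rewrite -subr_eq0 opprK -fgpD addrC subrr fgp0. Qed.

Lemma fgpB x y : fgp (x - y) = fgp x - fgp y.
Proof. by rewrite fgpD fgpN. Qed.

Lemma fgpMz x k : fgp (x *~ k) = fgp x *~ k.
Proof.
have fgpMn n : fgp (x *+ n) = fgp x *+ n.
  by elim: n => [|n IH]; rewrite ?mulr0n ?fgp0 // !mulrS fgpD IH.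
case: k => n; first exact: fgpMn.
by rewrite NegzE !mulrNz fgpN -!pmulrn fgpMn.
Qed.

Lemma fgp_inj : {in M &, injective f} -> injective fgp.
Proof.
move=> finj x y e; case: (diff_reprP (x - y)) => ha hb exy.
have : fgp (x - y) = 0 by rewrite fgpB e subrr.
rewrite (fgpE ha hb exy) => /eqP; rewrite subr_eq0 => /eqP /finj e'.
by apply/eqP; rewrite -subr_eq0 exy e' ?subrr.
Qed.

End Groupification.

Section Contraction.
Variables (G H : zmodType) (M : pred G) (N : pred H) (f : G -> H)
  (Ga : mgraph G) (Gb : mgraph H) (phi : mg_X Ga -> mg_X Gb).
Hypotheses (hM : sharp_integral_monoid M) (hN : sharp_integral_monoid N)
  (hGa : is_metrised_graph Ga M) (hf : monoid_hom M N f)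
  (finj : {in M &, injective f}) (hc : is_edge_contraction f phi).

Local Notation Xa := (mg_X Ga).
Local Notation Xb := (mg_X Gb).
Local Notation ra := (@mg_r G Ga).
Local Notation ia := (@mg_i G Ga).
Local Notation la := (@mg_l G Ga).
Local Notation rb := (@mg_r H Gb).
Local Notation ib := (@mg_i H Gb).
Local Notation lb := (@mg_l H Gb).
Local Notation F := (fgp M f).

Lemma length_in_monoid e : la e \in M.
Proof. by case: hGa => _ [_ [_ [_ [_ []]]]]. Qed.

Lemma is_vertex_r x : is_vertex (ra x).
Proof. by case: hGa => r_idem _; rewrite /is_vertex r_idem. Qed.

Lemma half_edge_length_neq0 e : is_half_edge e -> la e != 0.
Proof.
case: hGa => _ [_ [_ [_ [l0 _]]]] he; apply/eqP => /l0 /eqP.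
exact/negP.
Qed.

Lemma half_edge_flength_neq0 e : is_half_edge e -> f (la e) != 0.
Proof.
move=> /half_edge_length_neq0; apply: contra => /eqP fl0; apply/eqP.
case: hf => _ f0 _.
by apply: finj; rewrite ?length_in_monoid ?monoid0 // fl0 f0.
Qed.

Lemma flength_in_monoid e : f (la e) \in N.
Proof. by case: hf => fM _ _; apply/fM/length_in_monoid. Qed.

Lemma contr_rel_false (x y : Xa) : contr_rel f x y = false.
Proof.
apply/negbTE/existsP => -[e /and4P [/half_edge_flength_neq0 he /eqP fl0 _ _]].
by rewrite fl0 eqxx in he.
Qed.

Lemma phi_inj : injective phi.
Proof.
move=> x y /(proj1 (proj1 (proj2 hc) x y)) /connectP [[|z p]] /=.
  by move=> _ ->.
by rewrite contr_rel_false.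
Qed.

Lemma phi_preim y : exists x, phi x == y.
Proof. by case: (proj1 hc y) => x <-; exists x. Qed.

Definition psi (y : Xb) : Xa := xchoose (phi_preim y).

Lemma psiK : cancel psi phi.
Proof. by move=> y; apply/eqP/(xchooseP (phi_preim y)). Qed.

Lemma phiK : cancel phi psi.
Proof. by move=> x; apply: phi_inj; rewrite psiK. Qed.

Lemma r_phi x : rb (phi x) = phi (ra x).
Proof. by case: hc => _ [_ [-> _]]. Qed.

Lemma i_phi x : ib (phi x) = phi (ia x).
Proof. by case: hc => _ [_ [_ [-> _]]]. Qed.

Lemma l_phi x : lb (phi x) = f (la x).
Proof. by case: hc => _ [_ [_ [_ ->]]]. Qed.

Lemma is_vertex_phi x : is_vertex (phi x) = is_vertex x.
Proof. by rewrite /is_vertex r_phi (inj_eq phi_inj). Qed.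

Lemma is_half_edge_phi x : is_half_edge (phi x) = is_half_edge x.
Proof. by rewrite /is_half_edge r_phi (inj_eq phi_inj). Qed.

Lemma sum_phi (P : pred Xb) (A : Xb -> int) :
  \sum_(y | P y) A y = \sum_(x | P (phi x)) A (phi x).
Proof. by apply/reindex/onW_bij; exists psi; [exact: phiK | exact: psiK]. Qed.

Definition related_potentials (g : Xa -> G) (g' : Xb -> H) : Prop :=
  forall u v, is_vertex u -> is_vertex v -> g' (phi u) - g' (phi v) = F (g u - g v).

Lemma fgp_length e k : F (la e *~ k) = f (la e) *~ k.
Proof. by rewrite (fgpMz hM hf) (fgp_monoid hM hf (length_in_monoid e)). Qed.

Lemma PL_related g g' : related_potentials g g' -> PL g <-> PL g'.
Proof.
move=> rel; split=> [PLg y | PLg' e he].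
  rewrite -(psiK y) is_half_edge_phi => /PLg [k ek]; exists k.
  by rewrite r_phi i_phi r_phi l_phi rel ?is_vertex_r // ek fgp_length.
have := PLg' (phi e); rewrite is_half_edge_phi => /(_ he) [k].
rewrite r_phi i_phi r_phi l_phi rel ?is_vertex_r // -fgp_length => /(fgp_inj hM hf finj).
by exists k.
Qed.

Lemma Laplacian_related g g' :
  related_potentials g g' -> PL g -> forall x, Laplacian g' (phi x) = Laplacian g x.
Proof.
move=> rel PLg x; rewrite /Laplacian is_vertex_phi; case: ifP => // vx.
rewrite sum_phi; apply: eq_big => e.
  by rewrite r_phi (inj_eq phi_inj) is_half_edge_phi.
rewrite r_phi (inj_eq phi_inj) is_half_edge_phi => /andP [/eqP <- he].
rewrite i_phi r_phi l_phi rel ?is_vertex_r //.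
have [k ->] := PLg e he.
rewrite fgp_length (zquotE hM _ (length_in_monoid e) (half_edge_length_neq0 he)).
by rewrite (zquotE hN _ (flength_in_monoid e) (half_edge_flength_neq0 he)).
Qed.

Lemma related_fgp g : related_potentials g (fun y => F (g (psi y))).
Proof. by move=> u v _ _; rewrite !phiK (fgpB hM hf). Qed.

Lemma PL_diff_in_range g' (p : seq Xa) u :
  PL g' -> path (@adj G Ga) u p -> exists z, g' (phi u) - g' (phi (last u p)) = F z.
Proof.
move=> PLg'; elim: p u => [|w p IH] u /=.
  by exists 0; rewrite subrr (fgp0 hM hf).
case/andP=> /existsP [e /and3P [he /eqP reu /eqP riew]] /IH [z ez].
have := PLg' (phi e); rewrite is_half_edge_phi => /(_ he) [k].
rewrite r_phi i_phi r_phi l_phi reu riew -fgp_length => ek.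
by exists (la e *~ k + z); rewrite (fgpD hM hf) -ek -ez addrA subrK.
Qed.

Lemma related_exists g' : PL g' -> exists g, related_potentials g g'.
Proof.
move=> PLg'; case: (pickP (@is_vertex G Ga)) => [v0 hv0 | novertex]; last first.
  by exists (fun _ => 0) => u v; rewrite novertex.
have diff_in_range v : is_vertex v -> exists z, F z = g' (phi v) - g' (phi v0).
  move=> hv; case: hGa => _ [_ [_ [_ [_ [_ /(_ v v0 hv hv0)]]]]].
  by case/connectP=> p pth ->; have [z ez] := PL_diff_in_range PLg' pth; exists z.
pose g v := epsilon (inhabits 0) (fun z => F z = g' (phi v) - g' (phi v0)).
have gE v : is_vertex v -> F (g v) = g' (phi v) - g' (phi v0).
  by move/diff_in_range; apply: epsilon_spec.
exists g => u v hu hv.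
by rewrite (fgpB hM hf) !gE // opprB addrA subrK.
Qed.

Lemma lin_equiv_phi A B A' B' :
  A =1 A' \o phi -> B =1 B' \o phi -> lin_equiv A B <-> lin_equiv A' B'.
Proof.
move=> eA eB; split=> [[g [PLg hg]] | [g' [PLg' hg']]].
  have rel := related_fgp g.
  exists (fun y => F (g (psi y))); split; first exact/(PL_related rel).
  by move=> y; rewrite -(psiK y) (Laplacian_related rel PLg) -hg eA eB.
have [g rel] := related_exists PLg'.
exists g; split; first exact/(PL_related rel).
by move=> x; rewrite -(Laplacian_related rel) ?eA ?eB ?hg' //; apply/(PL_related rel).
Qed.

Lemma divisor_phi A A' : A =1 A' \o phi -> divisor A <-> divisor A'.
Proof.
move=> eA; split=> dA y.
  by rewrite -(psiK y) is_vertex_phi => /dA; rewrite eA.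
by rewrite eA /= -is_vertex_phi; apply: dA.
Qed.

Lemma effective_phi A A' : A =1 A' \o phi -> effective A <-> effective A'.
Proof.
move=> eA; split=> eff y; last by rewrite eA; apply: eff.
by have := eff (psi y); rewrite eA /= psiK.
Qed.

Lemma deg_phi A A' : A =1 A' \o phi -> deg A = deg A'.
Proof. by move=> eA; rewrite /deg sum_phi; apply: eq_bigr => x _; rewrite eA. Qed.

Lemma comp_psiK (A : Xa -> int) : A =1 (A \o psi) \o phi.
Proof. by move=> x /=; rewrite phiK. Qed.

Lemma linsys_nonempty_phi E E' :
  E =1 E' \o phi -> linsys_nonempty E <-> linsys_nonempty E'.
Proof.
move=> eE; split=> [[Ea [dA effA leA]] | [Eb [dB effB leB]]].
  have eA := comp_psiK Ea.
  exists (Ea \o psi); split.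
  - exact/(divisor_phi eA).
  - exact/(effective_phi eA).
  - exact/(lin_equiv_phi eA eE).
have eB : Eb \o phi =1 Eb \o phi by [].
exists (Eb \o phi); split.
- exact/(divisor_phi eB).
- exact/(effective_phi eB).
- exact/(lin_equiv_phi eB eE).
Qed.

Lemma rank_cond_phi D D' k : D =1 D' \o phi -> rank_cond D k <-> rank_cond D' k.
Proof.
move=> eD; split=> [hD Fb dFb effFb degFb | hD' Fa dFa effFa degFa].
  have eF : Fb \o phi =1 Fb \o phi by [].
  apply/(linsys_nonempty_phi (E := fun x => D x - Fb (phi x))) => [x /=|]; first by rewrite eD.
  by apply: hD; rewrite ?(divisor_phi eF) ?(effective_phi eF) ?(deg_phi eF).
have eF := comp_psiK Fa.
apply/(linsys_nonempty_phi (E' := fun y => D' y - Fa (psi y))) => [x /=|].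
  by rewrite eD phiK.
by apply: hD'; rewrite -?(divisor_phi eF) -?(effective_phi eF) -?(deg_phi eF).
Qed.

Lemma rank_phi D D' : D =1 D' \o phi -> rank D = rank D'.
Proof.
move=> eD; rewrite /rank; congr epsilon.
apply: functional_extensionality => k; apply: propositional_extensionality.
have rc k' := rank_cond_phi k' eD.
split=> -[hk kmax]; split=> [|k' hk'].
- exact/rc.
- exact/kmax/rc.
- exact/rc.
- exact/kmax/rc.
Qed.

Lemma pushforward_phi D : divisor D -> D =1 pushforward phi D \o phi.
Proof.
move=> dD x; rewrite /pushforward /=.
under eq_bigl do rewrite (inj_eq phi_inj).
have [vx | nvx] := boolP (is_vertex x).
  by rewrite (big_pred1 x) // => x' /=; case: eqP => [->|]; rewrite ?vx ?andbF.
by rewrite big_pred0 ?dD // => x'; case: eqP => [->|]; rewrite ?(negbTE nvx) ?andbF.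
Qed.

End Contraction.

Theorem mainTheorem10 (G H : zmodType) (M : pred G) (N : pred H)
    (Ga : mgraph G) (Gb : mgraph H) (f : G -> H)
    (phi : mg_X Ga -> mg_X Gb) (D : mg_X Ga -> int) :
  sharp_integral_monoid M -> sharp_integral_monoid N ->
  is_metrised_graph Ga M ->
  monoid_hom M N f -> {in M &, injective f} ->
  is_edge_contraction f phi -> is_metrised_graph Gb N ->
  divisor D ->
  rank (pushforward phi D) = rank D.
Proof.
move=> hM hN hGa hf finj hc _ dD.
have eD := pushforward_phi hM hGa hf finj hc dD.
by rewrite (rank_phi hM hN hGa hf finj hc eD).
Qed.
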